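(* For every integer $g\geq 3$ there exist a graph $G$ with girth $g$ and an $N\in\mathbb{N}$ such that $P_{DP}(G,m)<P(G,m)$ for every integer $m\geq N$.
   Context: All graphs are finite and simple. $P(G,m)$ denotes the chromatic polynomial of $G$. A cover of a graph $G$ is a pair $\mathcal{H}=(L,H)$ where $H$ is a graph and $L:V(G)\to\mathcal{P}(V(H))$ satisfies: (1) the sets $L(u)$, $u\in V(G)$, partition $V(H)$; (2) for every $u$, $H[L(u)]$ is complete; (3) if $E_H(L(u),L(v))\neq\emptyset$ then $u=v$ or $uv\in E(G)$; (4) if $uv\in E(G)$ then $E_H(L(u),L(v))$ is a matching (possibly empty). Here $E_H(S,U)$ is the set of edges of $H$ between $S$ and $U$. The cover is $m$-fold if $|L(u)|=m$ for all $u$. An $\mathcal{H}$-coloring is an independent set of $H$ of size $|V(G)|$. $P_{DP}(G,\mathcal{H})$ is the number of $\mathcal{H}$-colorings, and $P_{DP}(G,m)$ is the minimum of $P_{DP}(G,\mathcal{H})$ over all $m$-fold covers $\mathcal{H}$ of $G$. *)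

From mathcomp Require Import all_boot.
Set Implicit Arguments. Unset Strict Implicit. Unset Printing Implicit Defensive.

Section Graphs.
Variable V : finType.

Definition simple_graph (e : rel V) : Prop :=
  (forall u v, e u v = e v u) /\ (forall u, ~~ e u u).

Definition has_cycle (e : rel V) (k : nat) : Prop :=
  3 <= k /\ exists c : 'I_k -> V, injective c /\ forall i : 'I_k, e (c i) (c (ordS i)).

Definition girth_eq (e : rel V) (g : nat) : Prop :=
  has_cycle e g /\ forall k, k < g -> ~ has_cycle e k.

Definition chrom (e : rel V) (m : nat) : nat :=
  #|[set f : {ffun V -> 'I_m} | [forall u, forall v, e u v ==> (f u != f v)]]|.

(* m-fold covers.  WLOG V(H) = V * 'I_m with L(u) = {u} * 'I_m;
   H is encoded by its adjacency (a boolean function on pairs). *)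
Definition cover_rel (m : nat) := {ffun (V * 'I_m) * (V * 'I_m) -> bool}.

Definition is_cover (e : rel V) (m : nat) (H : cover_rel m) : bool :=
  [&&
      [forall x, forall y, H (x, y) == H (y, x)],
      [forall x, ~~ H (x, x)],
      [forall x, forall y, ((x.1 == y.1) && (x != y)) ==> H (x, y)],
      [forall x, forall y, (H (x, y) && (x.1 != y.1)) ==> e x.1 y.1] &
      (* (4) for uv in E(G), E_H(L(u),L(v)) is a matching *)
      [forall x, forall y, forall z,
         [&& e x.1 y.1, y.1 == z.1, H (x, y) & H (x, z)] ==> (y == z)]].

(* Number of H-colourings: independent sets of H of size |V(G)|. *)
Definition dp_count (m : nat) (H : cover_rel m) : nat :=
  #|[set I : {set V * 'I_m} |
       (#|I| == #|V|) && [forall x in I, forall y in I, ~~ H (x, y)]]|.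

Definition dp_trivial (m : nat) : cover_rel m :=
  [ffun p => (p.1.1 == p.2.1) && (p.1 != p.2)].

Lemma dp_trivial_cover (e : rel V) (m : nat) :
  simple_graph e -> is_cover e (dp_trivial m).
Proof.
move=> [esym eirr].
apply/and5P; split.
- apply/forallP=> x; apply/forallP=> y; by rewrite !ffunE /= [y.1 == _]eq_sym [y == _]eq_sym.
- apply/forallP=> x; rewrite ffunE /=; apply/negP=> /andP [_ /negP]; apply; exact/eqP.
- by apply/forallP=> x; apply/forallP=> y; apply/implyP; rewrite ffunE.
- apply/forallP=> x; apply/forallP=> y; apply/implyP; rewrite ffunE /=.
  by case/andP=> /andP [/eqP hx _]; rewrite hx eq_refl.
- apply/forallP=> x; apply/forallP=> y; apply/forallP=> z; apply/implyP.
  case/and4P=> exy _ hxy _; move: hxy; rewrite ffunE /= => /andP [/eqP hx _].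
  by move: exy; rewrite hx (negbTE (eirr _)).
Qed.

Lemma dp_exists (e : rel V) (m : nat) (He : simple_graph e) :
  exists n, [exists H : cover_rel m, is_cover e H && (dp_count H == n)].
Proof.
exists (dp_count (dp_trivial m)); apply/existsP; exists (dp_trivial m).
by rewrite dp_trivial_cover // eqxx.
Qed.

Definition dp_chrom (e : rel V) (m : nat) (He : simple_graph e) : nat :=
  ex_minn (@dp_exists e m He).

End Graphs.

From mathcomp Require Import all_boot zify.
Set Implicit Arguments. Unset Strict Implicit. Unset Printing Implicit Defensive.

(* For every g >= 3, the disjoint union G = C_g + C_2g has girth g and
   P_DP(G, m) < P(G, m) for all m >= 3.

   - Any family of colour permutations [tau u v] (with [tau v u] inverse to
     [tau u v]) defines an m-fold "permutation cover" of G, whose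
     H-colourings are exactly the maps f with f v <> tau u v (f u) along
     every edge; so P_DP(G, m) is at most the number of such twisted
     colourings.
   - Twisted colourings of a disjoint union factor as a product.
   - Colourings of the cycle C_(k+1) twisted by sigma on one edge are counted
     through walks of length k in the complete graph K_m: there are
     sum_x (sum_y W(x, y) - W(x, sigma x)) of them.  The number of walks
     between equal endpoints and between distinct endpoints differ by one,
     with a sign depending on the parity of k.  Hence on the even cycle C_2g
     the cyclic shift of colours on one edge yields fewer colourings than the
     identity, while C_g has proper colourings for m >= 3.
   - A cycle of C_n is C_n itself and a cycle of a disjoint union lies in one
     side, which gives the girth. *)

Lemma sum_tuple_cons (T : finType) (k : nat) (F : k.+1.-tuple T -> nat) :
  \sum_(t : k.+1.-tuple T) F t = \sum_(x : T) \sum_(s : k.-tuple T) F [tuple of x :: s].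
Proof.
rewrite pair_big /= (reindex (fun p : T * k.-tuple T => [tuple of p.1 :: p.2])) //.
exists (fun t : k.+1.-tuple T => (thead t, [tuple of behead t])) => [[x s] _|t _].
  by rewrite theadE; congr pair; apply: val_inj.
by rewrite /= -tuple_eta.
Qed.

Lemma sum_ffun_tuple (T : finType) (k : nat) (F : {ffun 'I_k -> T} -> nat) :
  \sum_(f : {ffun 'I_k -> T}) F f = \sum_(t : k.-tuple T) F [ffun i => tnth t i].
Proof.
rewrite (reindex (fun t : k.-tuple T => [ffun i => tnth t i])) //.
exists (fun f : {ffun 'I_k -> T} => [tuple f i | i < k]) => [t _|f _].
  by apply: eq_from_tnth => i; rewrite tnth_mktuple ffunE.
by apply/ffunP => i; rewrite !ffunE tnth_mktuple.
Qed.

Lemma card_set_sum (T : finType) (A : {set T}) : #|A| = \sum_(x : T) (x \in A).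
Proof. by rewrite -sum1_card big_mkcond; apply: eq_bigr => x _; case: (x \in A). Qed.

Section Walks.
Variable m : nat.

Definition neq_col (a b : 'I_m) : bool := a != b.

Definition walks (k : nat) (x y : 'I_m) : nat :=
  \sum_(s : k.-tuple 'I_m) (path neq_col x s && (last x s == y)).

(* The pair [(a_k, b_k)] of the numbers of walks of length [k] between two
   equal, resp. two distinct, vertices of K_m, by the evident recursion. *)
Fixpoint walk_counts (k : nat) : nat * nat :=
  if k is k'.+1 then
    let: (a, b) := walk_counts k' in ((m - 1) * b, a + (m - 2) * b)
  else (1, 0).

Lemma sum_eq_if (y : 'I_m) (a b : nat) :
  \sum_(z : 'I_m) (if z == y then a else b) = a + (m - 1) * b.
Proof.
rewrite (bigD1 y) //= eqxx (eq_bigr (fun _ => b)) => [|z /negbTE -> //].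
by rewrite sum_nat_const cardC1 card_ord subn1 mulnC.
Qed.

Lemma walksS (k : nat) (x y : 'I_m) :
  walks k.+1 x y = \sum_(z | z != x) walks k z y.
Proof.
rewrite /walks sum_tuple_cons [RHS]big_mkcond /=; apply: eq_bigr => z _.
rewrite /neq_col [z == x]eq_sym; case: (x != z) => /=; last by rewrite big1.
by apply: eq_bigr => s _.
Qed.

Lemma walks_closed_form (k : nat) (x y : 'I_m) :
  walks k x y = if x == y then (walk_counts k).1 else (walk_counts k).2.
Proof.
elim: k x y => [|k IH] x y.
  rewrite /walks (big_pred1 [tuple]) => [|t]; last by rewrite [t]tuple0; apply/esym/eqP.
  by rewrite /= eq_sym; case: (x == y).
rewrite walksS (eq_bigr (fun z => if z == y then (walk_counts k).1
                                  else (walk_counts k).2)) => [|z _]; last exact: IH.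
rewrite /=; case: (walk_counts k) => a b /=.
have [<-|neq_xy] := eqVneq x y.
  rewrite (eq_bigr (fun _ => b)) => [|z /negbTE -> //].
  by rewrite sum_nat_const cardC1 card_ord subn1 mulnC.
have m_ge2 : 2 <= m.
  by have := ltn_ord x; have := ltn_ord y; have : (x : nat) != y by []; lia.
have := sum_eq_if y a b; rewrite (bigD1 x) //= (negbTE neq_xy).
have -> : m - 1 = (m - 2).+1 by lia.
by rewrite mulSn addnCA => /addnI.
Qed.

Lemma walk_counts_parity (k : nat) : 2 <= m ->
  (walk_counts k).1 + odd k = (walk_counts k).2 + ~~ odd k.
Proof.
move=> m_ge2; elim: k => [|k IH] //=.
case: (walk_counts k) IH => a b /=; case: (odd k) => /= IH; nia.
Qed.

Lemma walk_counts_pos (k : nat) : 3 <= m -> 0 < k -> 0 < (walk_counts k).2.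
Proof.
move=> m_ge3; elim: k => [|[|k] IH] // _; move: IH => /=.
by case: (walk_counts k) => a b /=; nia.
Qed.

Lemma walks_avoiding (k : nat) (x c : 'I_m) :
  \sum_(s : k.-tuple 'I_m) (path neq_col x s && (last x s != c)) =
  \sum_y walks k x y - walks k x c.
Proof.
suff -> : \sum_y walks k x y =
          \sum_(s : k.-tuple 'I_m) (path neq_col x s && (last x s != c)) + walks k x c.
  by rewrite addnK.
rewrite /walks exchange_big -big_split /=; apply: eq_bigr => s _.
rewrite (bigD1 (last x s)) //= eqxx andbT big1 => [|y]; last first.
  by rewrite eq_sym => /negbTE ->; rewrite andbF.
by case: (path _ _ _); case: eqP.
Qed.

Lemma sum_walks (k : nat) (x : 'I_m) :
  \sum_y walks k x y = (walk_counts k).1 + (m - 1) * (walk_counts k).2.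
Proof.
rewrite -(sum_eq_if x); apply: eq_bigr => y _.
by rewrite walks_closed_form eq_sym.
Qed.

End Walks.
Arguments neq_col {m}.

Section Covers.
Variables (V : finType) (m : nat).

Definition twisted_colorings (e : rel V) (tau : V -> V -> 'I_m -> 'I_m) :
  {set {ffun V -> 'I_m}} :=
  [set f : {ffun V -> 'I_m} | [forall u, forall v, e u v ==> (f v != tau u v (f u))]].

Lemma chrom_twisted_id (e : rel V) :
  chrom e m = #|twisted_colorings e (fun _ _ => id)|.
Proof.
apply: eq_card => f; rewrite !inE.
by apply: eq_forallb => u; apply: eq_forallb => v; rewrite eq_sym.
Qed.

Lemma eq_twisted (e : rel V) (tau tau' : V -> V -> 'I_m -> 'I_m) :
  (forall u v, tau u v =1 tau' u v) -> twisted_colorings e tau = twisted_colorings e tau'.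
Proof.
move=> eq_tau; apply/setP => f; rewrite !inE.
by apply: eq_forallb => u; apply: eq_forallb => v; rewrite eq_tau.
Qed.

Lemma dp_chrom_le_cover (e : rel V) (He : simple_graph e) (H : cover_rel V m) :
  is_cover e H -> dp_chrom m He <= dp_count H.
Proof.
move=> coverH; rewrite /dp_chrom; case: ex_minnP => n _; apply.
by apply/existsP; exists H; rewrite coverH eqxx.
Qed.

(* Since every fibre [L(u)] is a clique, an [H]-colouring meets each fibre in
   exactly one vertex: it is the graph of a map [V -> 'I_m]. *)
Lemma dp_count_le_maps (e : rel V) (H : cover_rel V m) : 0 < m -> is_cover e H ->
  dp_count H <=
  #|[set f : {ffun V -> 'I_m} | [forall u, forall v, ~~ H ((u, f u), (v, f v))]]|.
Proof.
move=> m_gt0 /and5P [_ _ /forallP fibre_clique _ _].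
pose phi (I : {set V * 'I_m}) :=
  [ffun u => odflt (Ordinal m_gt0) [pick a | (u, a) \in I]].
have graphE I : I \in [set I : {set V * 'I_m} |
      (#|I| == #|V|) && [forall x in I, forall y in I, ~~ H (x, y)]] -> I = [set (u, phi I u) | u : V].
  rewrite inE => /andP [/eqP cardI /forallP indepI].
  apply/eqP; rewrite eqEcard card_imset => [|u v [] //].
  rewrite cardI leqnn andbT; apply/subsetP => -[u a] Iua.
  apply/imsetP; exists u => //; rewrite ffunE.
  case: pickP => [b Iub|/(_ a)]; last by rewrite Iua.
  congr pair => /=; apply/eqP; apply: contraT => neq_ab.
  have := indepI (u, a); rewrite Iua => /forallP /(_ (u, b)); rewrite Iub /=.
  have /forallP /(_ (u, b)) := fibre_clique (u, a).
  by rewrite /= eqxx xpair_eqE eqxx neq_ab /= => ->.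
rewrite /dp_count; set S := (X in #|X| <= _).
rewrite -(card_in_imset (f := phi) (D := S)); last first.
  by move=> I J SI SJ eqIJ; rewrite (graphE I SI) (graphE J SJ) eqIJ.
apply: subset_leq_card; apply/subsetP => _ /imsetP [I SI ->].
rewrite inE; apply/forallP => u; apply/forallP => v.
have inI w : (w, phi I w) \in I by rewrite [in X in _ \in X](graphE I SI) imset_f.
move: (SI); rewrite inE => /andP [_ /forallP /(_ (u, phi I u))].
by rewrite inI => /forallP /(_ (v, phi I v)); rewrite inI.
Qed.

Section PermutationCover.
Variables (e : rel V) (tau : V -> V -> 'I_m -> 'I_m).
Hypothesis tauK : forall u v, cancel (tau u v) (tau v u).

Lemma twist_eq_sym (u v : V) (a b : 'I_m) : (b == tau u v a) = (a == tau v u b).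
Proof. by apply/eqP/eqP => [->|->]; rewrite tauK. Qed.

Definition perm_cover : cover_rel V m :=
  [ffun p => ((p.1.1 == p.2.1) && (p.1.2 != p.2.2)) ||
             (e p.1.1 p.2.1 && (p.2.2 == tau p.1.1 p.2.1 p.1.2))].

Hypothesis He : simple_graph e.

Lemma perm_cover_is_cover : is_cover e perm_cover.
Proof.
have [e_sym e_irr] := He.
apply/and5P; split.
- apply/forallP => x; apply/forallP => y; rewrite !ffunE /=.
  by rewrite [y.1 == _]eq_sym [y.2 == x.2]eq_sym e_sym twist_eq_sym.
- by apply/forallP => x; rewrite ffunE /= !eqxx /= (negbTE (e_irr _)).
- apply/forallP => -[u a]; apply/forallP => -[v b] /=; apply/implyP.
  by case/andP => /eqP <-; rewrite xpair_eqE eqxx ffunE /= eqxx => ->.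
- apply/forallP => x; apply/forallP => y; rewrite ffunE /=.
  by apply/implyP; case: (x.1 =P y.1) => //= _; rewrite ?andbF ?andbT // => /andP [].
- apply/forallP => -[u a]; apply/forallP => -[v b]; apply/forallP => -[w c] /=.
  apply/implyP; case/and4P => e_uv /eqP <-; rewrite !ffunE /= e_uv.
  have -> : (u == v) = false by apply: contraTF e_uv => /eqP ->; rewrite e_irr.
  by move=> /eqP -> /eqP ->.
Qed.

Lemma perm_cover_maps :
  [set f : {ffun V -> 'I_m} | [forall u, forall v, ~~ perm_cover ((u, f u), (v, f v))]] =
  twisted_colorings e tau.
Proof.
apply/setP => f; rewrite !inE; apply: eq_forallb => u; apply: eq_forallb => v.
rewrite ffunE /= negb_or negb_and negbK.
have [<-|_] := eqVneq u v; last by case: (e u v).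
by rewrite eqxx (negbTE (He.2 u)).
Qed.

Lemma dp_chrom_le_twisted : 0 < m -> dp_chrom m He <= #|twisted_colorings e tau|.
Proof.
move=> m_gt0; rewrite -perm_cover_maps.
apply: leq_trans (dp_count_le_maps m_gt0 perm_cover_is_cover).
exact: dp_chrom_le_cover perm_cover_is_cover.
Qed.

End PermutationCover.
End Covers.

Lemma iter_ordS (n k : nat) (i : 'I_n) : (iter k (@ordS n) i : nat) = (i + k) %% n.
Proof.
elim: k => [|k IH]; first by rewrite addn0 modn_small.
by rewrite iterS /= IH -addn1 modnDml addn1 addnS.
Qed.

Lemma ordS_ind (n : nat) (P : 'I_n -> Prop) (i0 : 'I_n) :
  P i0 -> (forall i, P i -> P (ordS i)) -> forall j, P j.
Proof.
move=> P_i0 P_S j.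
have -> : j = iter (j + n - i0) (@ordS n) i0.
  apply: val_inj => /=; rewrite iter_ordS.
  have -> : i0 + (j + n - i0) = j + n by have := ltn_ord i0; lia.
  by rewrite modnDr modn_small.
by elim: (_ - _) => //= k; apply: P_S.
Qed.

Lemma ordS_neq (n : nat) (i : 'I_n) : 2 <= n -> ordS i != i.
Proof.
move=> n_ge2; apply/eqP => /(congr1 val) /=.
have := ltn_ord i; case: (ltngtP i.+1 n) => [lt_in|gt_in|eq_in] lt_i.
- by rewrite modn_small //; lia.
- lia.
- by rewrite eq_in modnn; lia.
Qed.

Lemma ordS_neq_pred (n : nat) (i : 'I_n) : 3 <= n -> ordS i != ord_pred i.
Proof.
move=> n_ge3; apply/eqP => eq_S_pred.
have : iter 2 (@ordS n) i = i by rewrite /= eq_S_pred ord_predK.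
move/(congr1 (@nat_of_ord n)); rewrite iter_ordS.
rewrite -{2}(modn_small (ltn_ord i)) -[X in _ = X %% n]addn0 => /eqP.
by rewrite eqn_modDl mod0n modn_small //; lia.
Qed.

Definition cycle_rel (n : nat) : rel 'I_n := fun i j => (j == ordS i) || (i == ordS j).
Arguments cycle_rel : clear implicits.

Lemma cycle_simple (n : nat) : 2 <= n -> simple_graph (cycle_rel n).
Proof.
move=> n_ge2; split => [i j|i]; first by rewrite /cycle_rel orbC.
by rewrite /cycle_rel orbb eq_sym ordS_neq.
Qed.

Lemma cycle_has_cycle (n : nat) : 3 <= n -> has_cycle (cycle_rel n) n.
Proof.
move=> n_ge3; split=> //; exists (fun i : 'I_n => i).
by split=> // i; rewrite /cycle_rel eqxx.
Qed.

Lemma cycle_neighbours (n : nat) (i j : 'I_n) :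
  cycle_rel n i j -> j = ordS i \/ j = ord_pred i.
Proof. by case/orP => /eqP ->; [left | right; rewrite ordSK]. Qed.

(* The only cycle of [C_n] is [C_n] itself: the vertex set of a cycle is
   closed under [ordS], since a cycle vertex [w] has two distinct cycle
   neighbours, both among [ordS w] and [ord_pred w]. *)
Lemma cycle_has_cycle_eq (n l : nat) : has_cycle (cycle_rel n) l -> l = n.
Proof.
move=> [l_ge3 [c [c_inj c_edge]]].
have sym i j : cycle_rel n i j = cycle_rel n j i by rewrite /cycle_rel orbC.
set S := [set c i | i : 'I_l].
have S_closed w : w \in S -> ordS w \in S.
  case/imsetP => i _ ->.
  have next := c_edge i.
  have prev := c_edge (ord_pred i); rewrite ord_predK sym in prev.
  have neq_np : c (ordS i) != c (ord_pred i) by rewrite (inj_eq c_inj) ordS_neq_pred.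
  case: (cycle_neighbours next) => [<-|next_pred]; first exact: imset_f.
  case: (cycle_neighbours prev) => [<-|prev_pred]; first exact: imset_f.
  by move: neq_np; rewrite next_pred prev_pred eqxx.
have i0 : 'I_l by exists 0; lia.
have S_full : forall w, w \in S by apply: (ordS_ind _ S_closed); exact: (imset_f c (x := i0)).
have <- : #|S| = l by rewrite card_imset // card_ord.
have -> : S = [set: 'I_n] by apply/setP => w; rewrite S_full inE.
by rewrite cardsT card_ord.
Qed.

Section DisjointUnion.
Variables (a b m : nat) (e1 : rel 'I_a) (e2 : rel 'I_b).

Lemma split_lshift (i : 'I_a) : split (lshift b i) = inl i.
Proof. exact: (unsplitK (inl i)). Qed.

Lemma split_rshift (j : 'I_b) : split (rshift a j) = inr j.
Proof. exact: (unsplitK (inr j)). Qed.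

Definition union_rel : rel 'I_(a + b) := fun u v =>
  match split u, split v with
  | inl i, inl j => e1 i j
  | inr i, inr j => e2 i j
  | _, _ => false
  end.

Lemma union_rel_side (u v : 'I_(a + b)) : union_rel u v -> (u < a) = (v < a).
Proof. by rewrite /union_rel; case: splitP => i _; case: splitP => j _. Qed.

Lemma union_simple : simple_graph e1 -> simple_graph e2 -> simple_graph union_rel.
Proof.
move=> [sym1 irr1] [sym2 irr2]; split=> [u v|u]; rewrite /union_rel.
  by case: (split u) => i; case: (split v) => j.
by case: (split u) => i; rewrite ?irr1 ?irr2.
Qed.

Lemma has_cycle_union_l (l : nat) : has_cycle e1 l -> has_cycle union_rel l.
Proof.
move=> [l_ge3 [c [c_inj c_edge]]]; split=> //; exists (fun i => lshift b (c i)).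
split=> [i j /lshift_inj /c_inj //|i].
by rewrite /union_rel !split_lshift.
Qed.

(* A cycle of the union is connected, hence lies within one side. *)
Lemma has_cycle_union (l : nat) :
  has_cycle union_rel l -> has_cycle e1 l \/ has_cycle e2 l.
Proof.
move=> [l_ge3 [c [c_inj c_edge]]].
have i0 : 'I_l by exists 0; lia.
have side i : (c i < a) = (c i0 < a).
  apply: (ordS_ind (P := fun i => (c i < a) = (c i0 < a))) => // j <-.
  by rewrite (union_rel_side (c_edge j)).
case: (ltnP (c i0) a) => side0; [left | right]; split=> //.
- have lt_ca i : c i < a by rewrite side.
  pose c1 i := Ordinal (lt_ca i).
  have cE i : c i = lshift b (c1 i) by apply: val_inj.
  exists c1; split=> [i j eq_ij|i]; first by apply: c_inj; rewrite !cE eq_ij.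
  by have := c_edge i; rewrite !cE /union_rel !split_lshift.
- have ge_ca i : a <= c i by rewrite leqNgt side -leqNgt.
  have lt_cb i : c i - a < b by have := ltn_ord (c i); have := ge_ca i; lia.
  pose c2 i := Ordinal (lt_cb i).
  have cE i : c i = rshift a (c2 i) by apply: val_inj; rewrite /= subnKC.
  exists c2; split=> [i j eq_ij|i]; first by apply: c_inj; rewrite !cE eq_ij.
  by have := c_edge i; rewrite !cE /union_rel !split_rshift.
Qed.

Variables (tau1 : 'I_a -> 'I_a -> 'I_m -> 'I_m) (tau2 : 'I_b -> 'I_b -> 'I_m -> 'I_m).

Definition union_twist (u v : 'I_(a + b)) : 'I_m -> 'I_m :=
  match split u, split v with
  | inl i, inl j => tau1 i j
  | inr i, inr j => tau2 i j
  | _, _ => id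
  end.

Lemma union_twistK :
  (forall i j, cancel (tau1 i j) (tau1 j i)) -> (forall i j, cancel (tau2 i j) (tau2 j i)) ->
  forall u v, cancel (union_twist u v) (union_twist v u).
Proof.
by move=> tau1K tau2K u v; rewrite /union_twist; case: (split u) => i; case: (split v).
Qed.

Lemma card_twisted_union :
  #|twisted_colorings union_rel union_twist| =
  #|twisted_colorings e1 tau1| * #|twisted_colorings e2 tau2|.
Proof.
pose join (p : {ffun 'I_a -> 'I_m} * {ffun 'I_b -> 'I_m}) : {ffun 'I_(a + b) -> 'I_m} :=
  [ffun u => match split u with inl i => p.1 i | inr j => p.2 j end].
pose cut (f : {ffun 'I_(a + b) -> 'I_m}) :=
  ([ffun i => f (lshift b i)], [ffun j => f (rshift a j)]).
have joinK : cancel join cut.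
  by move=> [f1 f2]; congr pair; apply/ffunP => i; rewrite !ffunE ?split_lshift ?split_rshift.
have cutK : cancel cut join.
  by move=> f; apply/ffunP => u; rewrite !ffunE; case: split_ordP => i ->; rewrite ffunE.
have join_twisted p : (join p \in twisted_colorings union_rel union_twist) =
    (p.1 \in twisted_colorings e1 tau1) && (p.2 \in twisted_colorings e2 tau2).
  rewrite !inE; apply/forallP/andP => [col|[/forallP col1 /forallP col2] u].
    split; apply/forallP => i; apply/forallP => j.
      have /forallP /(_ (lshift b j)) := col (lshift b i).
      by rewrite /union_rel /union_twist !ffunE !split_lshift.
    have /forallP /(_ (rshift a j)) := col (rshift a i).
    by rewrite /union_rel /union_twist !ffunE !split_rshift.
  apply/forallP => v; rewrite /union_rel /union_twist !ffunE.
  case: (split u) => i; case: (split v) => j //.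
    by have /forallP := col1 i.
  by have /forallP := col2 i.
rewrite -cardsX -(card_imset _ (can_inj joinK)); apply: eq_card => f.
apply/idP/imsetP => [col_f|[p col_p ->]].
  by exists (cut f); rewrite ?cutK // inE -join_twisted cutK.
by rewrite join_twisted; move: col_p; rewrite inE.
Qed.

End DisjointUnion.

Lemma union_twist_id (a b m : nat) (u v : 'I_(a + b)) :
  union_twist (fun _ _ => @id 'I_m) (fun _ _ => @id 'I_m) u v =1 id.
Proof. by move=> x; rewrite /union_twist; case: (split u); case: (split v). Qed.

Section CycleColorings.
Variable m : nat.

Lemma twisted_cycle (n : nat) (tau : 'I_n -> 'I_n -> 'I_m -> 'I_m)
    (tauK : forall u v, cancel (tau u v) (tau v u)) (f : {ffun 'I_n -> 'I_m}) :
  (f \in twisted_colorings (cycle_rel n) tau) =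
  [forall i, f i != tau (ordS i) i (f (ordS i))].
Proof.
rewrite inE; apply/forallP/forallP => [col i|col u].
  by have /forallP /(_ i) := col (ordS i); rewrite /cycle_rel eqxx orbT.
apply/forallP => v; apply/implyP; case/orP => /eqP ->; last exact: col.
by rewrite (twist_eq_sym tauK) col.
Qed.

Lemma ordS_val (k : nat) (i : 'I_k.+1) : (ordS i : nat) = if i == ord_max then 0 else i.+1.
Proof.
rewrite /= -val_eqE /=; case: eqP => [->|/eqP ne_ik]; first by rewrite modnn.
have lt_i := ltn_ord i; rewrite modn_small //; lia.
Qed.

Lemma twisted_cycle_tuple (k : nat) (sigma : 'I_m -> 'I_m) (x : 'I_m) (s : k.-tuple 'I_m) :
  [forall i : 'I_k.+1, tnth [tuple of x :: s] i !=
     (if i == ord_max then sigma else id) (tnth [tuple of x :: s] (ordS i))] =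
  path neq_col x s && (last x s != sigma x).
Proof.
have size_s : size s = k := size_tuple s.
have last_t : tnth [tuple of x :: s] ord_max = last x s.
  by rewrite (tnth_nth x) (last_nth x) size_s.
have first_t : tnth [tuple of x :: s] (ordS ord_max) = x.
  by rewrite (tnth_nth x) ordS_val eqxx.
apply/forallP/andP => [col|[/(pathP x) col_path col_last] i].
  split; last by have := col ord_max; rewrite eqxx last_t first_t.
  apply/(pathP x) => i; rewrite size_s => lt_ik.
  have not_max : (Ordinal (ltnW lt_ik : i < k.+1) == ord_max) = false.
    by rewrite -val_eqE /= ltn_eqF.
  have := col (Ordinal (ltnW lt_ik : i < k.+1)).
  by rewrite !(tnth_nth x) ordS_val not_max.
have [->|ne_ik] := eqVneq i ord_max; first by rewrite last_t first_t.
rewrite !(tnth_nth x) ordS_val (negbTE ne_ik) /=.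
apply: col_path; rewrite size_s.
by move: ne_ik; rewrite -val_eqE /= => ne_ik; have := ltn_ord i; lia.
Qed.

Lemma card_twisted_cycle (k : nat) (tau : 'I_k.+1 -> 'I_k.+1 -> 'I_m -> 'I_m)
    (sigma : 'I_m -> 'I_m) (tauK : forall u v, cancel (tau u v) (tau v u))
    (tau_edge : forall i, tau (ordS i) i = if i == ord_max then sigma else id) :
  #|twisted_colorings (cycle_rel k.+1) tau| =
  \sum_(x : 'I_m) (\sum_y walks k x y - walks k x (sigma x)).
Proof.
rewrite card_set_sum sum_ffun_tuple sum_tuple_cons; apply: eq_bigr => x _.
rewrite -walks_avoiding; apply: eq_bigr => s _.
rewrite twisted_cycle // -twisted_cycle_tuple; congr nat_of_bool.
by apply: eq_forallb => i; rewrite !ffunE tau_edge.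
Qed.

Definition cycle_twist (k : nat) (sigma sigma' : 'I_m -> 'I_m) (u v : 'I_k.+1) : 'I_m -> 'I_m :=
  if (u == ord0) && (v == ord_max) then sigma
  else if (u == ord_max) && (v == ord0) then sigma' else id.

(* [cycle_twist] is compatible with reversing edges when [sigma'] is the
   inverse of [sigma] and [0 < k] (so that the closing edge is no loop). *)
Lemma cycle_twistK (k : nat) (sigma sigma' : 'I_m -> 'I_m) :
  0 < k -> cancel sigma sigma' -> cancel sigma' sigma ->
  forall u v : 'I_k.+1, cancel (cycle_twist sigma sigma' u v) (cycle_twist sigma sigma' v u).
Proof.
move=> k_gt0 sigmaK sigma'K u v; rewrite /cycle_twist.
have ne_0max : (ord0 == ord_max :> 'I_k.+1) = false by rewrite -val_eqE /=; lia.
have ne_max0 : (ord_max == ord0 :> 'I_k.+1) = false by rewrite eq_sym.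
case: (eqVneq u ord0) => [->|_]; case: (eqVneq v ord_max) => [->|_] /=;
  rewrite ?ne_0max ?ne_max0 ?andbF //.
by rewrite andbC; case: ifP.
Qed.

(* Along the oriented edges [ordS i -> i], [cycle_twist] is [sigma] on the
   closing edge and the identity elsewhere (the cycle is not a double edge). *)
Lemma cycle_twist_edge (k : nat) (sigma sigma' : 'I_m -> 'I_m) : 1 < k ->
  forall i : 'I_k.+1, cycle_twist sigma sigma' (ordS i) i = if i == ord_max then sigma else id.
Proof.
move=> k_gt1 i; rewrite /cycle_twist.
have [->|ne_imax] := eqVneq i ord_max.
  have -> : ordS (@ord_max k) = ord0.
    by apply: val_inj; have := ordS_val (@ord_max k); rewrite eqxx.
  by rewrite !eqxx.
have -> : (ordS i == ord0) = false.
  by apply/eqP => /(congr1 (@nat_of_ord _)); rewrite ordS_val (negbTE ne_imax).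
have [->|_] := eqVneq i ord0; last by rewrite !andbF.
suff -> : (ordS (@ord0 k) == ord_max) = false by [].
apply/eqP => /(congr1 (@nat_of_ord _)); rewrite ordS_val.
by case: eqP => [/(congr1 (@nat_of_ord _))|_] /=; lia.
Qed.

Lemma card_proper_cycle (k : nat) :
  #|twisted_colorings (cycle_rel k.+1) (fun _ _ => @id 'I_m)| = m * ((m - 1) * (walk_counts m k).2).
Proof.
rewrite (@card_twisted_cycle k _ id) => [||i] //; last by case: ifP.
rewrite (eq_bigr (fun _ => (m - 1) * (walk_counts m k).2)) => [|x _].
  by rewrite sum_nat_const card_ord.
by rewrite sum_walks walks_closed_form eqxx addKn.
Qed.

Lemma card_shifted_cycle (k : nat) : 1 < k -> 2 <= m ->
  #|twisted_colorings (cycle_rel k.+1) (cycle_twist (@ordS m) (@ord_pred m))| =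
  m * ((walk_counts m k).1 + (m - 1) * (walk_counts m k).2 - (walk_counts m k).2).
Proof.
move=> k_gt1 m_ge2.
rewrite (@card_twisted_cycle k _ (@ordS m)); first last.
- exact: cycle_twist_edge.
- by apply: cycle_twistK; [lia | exact: ordSK | exact: ord_predK].
rewrite (eq_bigr (fun _ => (walk_counts m k).1 + (m - 1) * (walk_counts m k).2
                           - (walk_counts m k).2)) => [|x _].
  by rewrite sum_nat_const card_ord.
by rewrite sum_walks walks_closed_form eq_sym (negbTE (ordS_neq x m_ge2)).
Qed.

(* On an even cycle ([k] odd) the shift twist strictly decreases the count. *)
Lemma shifted_lt_proper (k : nat) : odd k -> 1 < k -> 2 <= m ->
  #|twisted_colorings (cycle_rel k.+1) (cycle_twist (@ordS m) (@ord_pred m))| <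
  #|twisted_colorings (cycle_rel k.+1) (fun _ _ => @id 'I_m)|.
Proof.
move=> odd_k k_gt1 m_ge2; rewrite card_shifted_cycle // card_proper_cycle.
have := walk_counts_parity k m_ge2; rewrite odd_k.
case: (walk_counts m k) => a b /= ab; rewrite ltn_pmul2l; nia.
Qed.

Lemma proper_cycle_pos (k : nat) : 0 < k -> 3 <= m ->
  0 < #|twisted_colorings (cycle_rel k.+1) (fun _ _ => @id 'I_m)|.
Proof.
move=> k_gt0 m_ge3; rewrite card_proper_cycle.
have := walk_counts_pos m_ge3 k_gt0; nia.
Qed.

End CycleColorings.

Lemma girth_two_cycles (g h : nat) : 3 <= g -> g <= h ->
  girth_eq (union_rel (cycle_rel g) (cycle_rel h)) g.
Proof.
move=> g_ge3 le_gh; split; first exact/has_cycle_union_l/cycle_has_cycle.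
by move=> l lt_lg /has_cycle_union [] /cycle_has_cycle_eq; lia.
Qed.

(* The graph [C_g + C_2g] with the shift twist on one edge of [C_2g]:
   [P_DP <= P(C_g) * (shifted colourings of C_2g) < P(C_g) * P(C_2g)]. *)
Theorem mainTheorem2 (g : nat) : 3 <= g ->
  exists (n : nat) (e : rel 'I_n) (He : simple_graph e),
    girth_eq e g /\
    exists N : nat, forall m : nat, N <= m -> dp_chrom m He < chrom e m.
Proof.
case: g => [//|k] g_ge3; have k_gt1 : 1 < k by lia.
pose G := union_rel (cycle_rel k.+1) (cycle_rel (k + k.+1).+1).
have simple_G : simple_graph G by apply: union_simple; apply: cycle_simple; lia.
exists (k.+1 + (k + k.+1).+1), G, simple_G.
split; first by apply: girth_two_cycles; lia.
exists 3 => m m_ge3.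
pose tau : 'I_(k.+1 + (k + k.+1).+1) -> _ -> 'I_m -> 'I_m :=
  union_twist (fun _ _ => id) (cycle_twist (@ordS m) (@ord_pred m)).
have tauK u v : cancel (tau u v) (tau v u).
  by apply: union_twistK => // i j; apply: cycle_twistK; [lia | exact: ordSK | exact: ord_predK].
apply: leq_ltn_trans (dp_chrom_le_twisted tauK simple_G _) _; first lia.
rewrite chrom_twisted_id -(eq_twisted _ (@union_twist_id _ _ _)) !card_twisted_union.
rewrite ltn_pmul2l; last by apply: proper_cycle_pos; lia.
by apply: shifted_lt_proper; [rewrite oddD /= addbN addbb | lia | lia].
Qed.
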